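(* Let $\hat y_1,\dots,\hat y_n\in\mathbb R$ be predictions, let $y_1,\dots,y_n\in\{-1,1\}$ be labels, let $\mathcal I^+=\{i: y_i=1\}$ and $\mathcal I^-=\{i:y_i=-1\}$, and let $m\ge 0$. Let $\ell(z)=(m-z)_+^2$ be the squared hinge loss, where $(z)_+=\max(z,0)$. Define $v_i=\hat y_i+m\,I[y_i=-1]$ for $i=1,\dots,n$ (where $I[\cdot]$ is $1$ if the condition holds and $0$ otherwise), and let $s_1,\dots,s_n$ be a permutation of $\{1,\dots,n\}$ with $v_{s_1}\le\cdots\le v_{s_n}$. Set $a_0=b_0=c_0=L_0=0$ and for $i=1,\dots,n$ define recursively $$a_i=a_{i-1}+I[y_{s_i}=1],\quad b_i=b_{i-1}+I[y_{s_i}=1]\,2(m-\hat y_{s_i}),\quad c_i=c_{i-1}+I[y_{s_i}=1]\,(m-\hat y_{s_i})^2,$$ $$L_i=L_{i-1}+I[y_{s_i}=-1]\left(a_i\hat y_{s_i}^2+b_i\hat y_{s_i}+c_i\right).$$ Then $$\sum_{k\in\mathcal I^-}\sum_{j\in\mathcal I^+}\ell(\hat y_j-\hat y_k)=L_n.$$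
   Context: $m$ is a margin hyper-parameter; the left-hand side is the all-pairs squared hinge loss summed over all pairs of a positively labeled and a negatively labeled example. *)

From mathcomp Require Import all_boot all_order all_algebra all_fingroup.
Set Implicit Arguments. Unset Strict Implicit. Unset Printing Implicit Defensive.
Import Order.TTheory GRing.Theory Num.Theory.
Local Open Scope ring_scope.

Definition pos_part {R : realDomainType} (z : R) : R := Num.max z 0.
Definition sq_hinge {R : realDomainType} (m z : R) : R := (pos_part (m - z)) ^+ 2.

Definition ind {R : realDomainType} (b : bool) : R := b%:R.

Definition vval {R : realDomainType} {n : nat} (m : R) (yh y : 'I_n -> R) (i : 'I_n) : R :=
  yh i + m * ind (y i == -1).

Definition abcL_step {R : realDomainType} {n : nat} (m : R) (yh y : 'I_n -> R)
    (acc : R * R * R * R) (j : 'I_n) : R * R * R * R :=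
  let: (a, b, c, L) := acc in
  let a' := a + ind (y j == 1) in
  let b' := b + ind (y j == 1) * (2%:R * (m - yh j)) in
  let c' := c + ind (y j == 1) * (m - yh j) ^+ 2 in
  let L' := L + ind (y j == -1) * (a' * yh j ^+ 2 + b' * yh j + c') in
  (a', b', c', L').

(* (a_n, b_n, c_n, L_n), starting from a_0 = b_0 = c_0 = L_0 = 0 and running
   over s_1, ..., s_n  (here s_i is s applied to the ordinal i-1). *)
Definition abcL_final {R : realDomainType} {n : nat} (m : R) (yh y : 'I_n -> R)
    (s : 'S_n) : R * R * R * R :=
  foldl (abcL_step m yh y) (0, 0, 0, 0) [seq s i | i <- enum 'I_n].

Definition L_final {R : realDomainType} {n : nat} (m : R) (yh y : 'I_n -> R)
    (s : 'S_n) : R := (abcL_final m yh y s).2.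

From mathcomp Require Import all_boot all_order all_algebra all_fingroup.
From mathcomp Require Import ring.
Import Order.TTheory GRing.Theory Num.Theory.
Set Implicit Arguments. Unset Strict Implicit. Unset Printing Implicit Defensive.
Local Open Scope ring_scope.

(* For a negative example [k] and a positive one [j],
   [v_j <= v_k] iff [m - (yh_j - yh_k) >= 0], so the loss of the pair is
   [(yh_k + m - yh_j)^2] when [j] comes before [k] and [0] when it comes after.
   Scanning the sorted list, a negative example therefore contributes the sum of
   [(yh_k + m - yh_j)^2] over the positives seen so far, and this quadratic in
   [yh_k] is [a yh_k^2 + b yh_k + c], whose coefficients [a, b, c] are exactly
   the running sums maintained by the recursion. *)

Lemma ind_mul (R : realDomainType) (b : bool) (x : R) :
  ind b * x = if b then x else 0.
Proof. by rewrite /ind mulr_natl mulrb. Qed.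

Lemma sq_hinge_ge (R : realDomainType) (m z : R) :
  z <= m -> sq_hinge m z = (m - z) ^+ 2.
Proof. by move=> le_zm; rewrite /sq_hinge /pos_part max_l // subr_ge0. Qed.

Lemma sq_hinge_le (R : realDomainType) (m z : R) : m <= z -> sq_hinge m z = 0.
Proof. by move=> le_mz; rewrite /sq_hinge /pos_part max_r ?expr0n // subr_le0. Qed.

Lemma sum_sqrD (R : comNzRingType) (I : Type) (r : seq I) (P : pred I)
    (f : I -> R) (x : R) :
  \sum_(j <- r | P j) (x + f j) ^+ 2 =
  (\sum_(j <- r | P j) 1) * x ^+ 2 + (\sum_(j <- r | P j) 2 * f j) * x
  + \sum_(j <- r | P j) f j ^+ 2.
Proof. by rewrite !mulr_suml -!big_split /=; apply: eq_bigr => j _; ring. Qed.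

Lemma pairwise_map_enum_ord (T : Type) (e : rel T) (n : nat) (f : 'I_n -> T) :
  (forall i j : 'I_n, (i < j)%N -> e (f i) (f j)) ->
  pairwise e [seq f i | i <- enum 'I_n].
Proof.
move=> e_f; have : pairwise ltn (iota 0 n).
  by rewrite -sorted_pairwise ?iota_ltn_sorted //; apply: ltn_trans.
by rewrite pairwise_map -val_enum_ord pairwise_map; apply: sub_pairwise.
Qed.

Lemma perm_index_enum_map (T : finType) (s : {perm T}) :
  perm_eq (index_enum T) [seq s i | i <- enum T].
Proof.
apply: uniq_perm; rewrite ?index_enum_uniq ?(map_inj_uniq perm_inj) ?enum_uniq //.
move=> i; rewrite mem_index_enum; apply/esym/mapP.
by exists (s^-1 i)%g; rewrite ?mem_enum ?permKV.
Qed.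

Section AllPairsSquaredHinge.

Variables (R : realFieldType) (n : nat) (m : R) (yh y : 'I_n -> R).

Local Notation v := (vval m yh y).

Definition all_pairs_loss (r : seq 'I_n) : R :=
  \sum_(k <- r | y k == -1) \sum_(j <- r | y j == 1) sq_hinge m (yh j - yh k).

Lemma all_pairs_loss_perm (r1 r2 : seq 'I_n) :
  perm_eq r1 r2 -> all_pairs_loss r1 = all_pairs_loss r2.
Proof.
move=> r12; rewrite /all_pairs_loss (perm_big _ r12).
by apply: eq_bigr => k _; apply: perm_big.
Qed.

Lemma vval_pos (j : 'I_n) : y j = 1 -> v j = yh j.
Proof.
have one_neq_m1 : (1 : R) != -1.
  by rewrite -subr_eq0 opprK paddr_eq0 ?ler01 // oner_eq0.
by move=> yj; rewrite /vval yj (negbTE one_neq_m1) /ind mulr0 addr0.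
Qed.

Lemma vval_neg (k : 'I_n) : y k = -1 -> v k = yh k + m.
Proof. by move=> yk; rewrite /vval yk eqxx /ind mulr1. Qed.

Lemma sq_hinge_pair_inactive (k j : 'I_n) :
  y k = -1 -> y j = 1 -> v k <= v j -> sq_hinge m (yh j - yh k) = 0.
Proof.
move=> yk yj; rewrite (vval_neg yk) (vval_pos yj) => le_kj.
by rewrite sq_hinge_le // lerBrDr addrC.
Qed.

Lemma sq_hinge_pair_active (k j : 'I_n) :
  y k = -1 -> y j = 1 -> v j <= v k ->
  sq_hinge m (yh j - yh k) = (yh k + m - yh j) ^+ 2.
Proof.
move=> yk yj; rewrite (vval_neg yk) (vval_pos yj) => le_jk.
rewrite sq_hinge_ge; last by rewrite lerBlDr addrC.
by congr (_ ^+ 2); ring.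
Qed.

Lemma all_pairs_loss_rcons (r : seq 'I_n) (x : 'I_n) :
  all (fun k => v k <= v x) r ->
  all_pairs_loss (rcons r x) = all_pairs_loss r
    + ind (y x == -1) * \sum_(j <- rcons r x | y j == 1) (yh x + m - yh j) ^+ 2.
Proof.
move=> /allP r_le_x; rewrite /all_pairs_loss big_rcons ind_mul /=.
congr (_ + _).
  rewrite big_seq_cond [RHS]big_seq_cond.
  apply: eq_bigr => k /andP[k_r /eqP yk].
  rewrite big_rcons /=; case: eqP => [yx|_]; last by rewrite addr0.
  by rewrite sq_hinge_pair_inactive ?addr0 ?r_le_x.
case: eqP => // yx; rewrite big_seq_cond [RHS]big_seq_cond.
apply: eq_bigr => j /andP[j_rx /eqP yj]; apply: sq_hinge_pair_active => //.
by move: j_rx; rewrite mem_rcons inE => /predU1P[->|/r_le_x].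
Qed.

Lemma foldl_abcL_step (r : seq 'I_n) :
  pairwise (fun i j => v i <= v j) r ->
  foldl (abcL_step m yh y) (0, 0, 0, 0) r =
  (\sum_(j <- r | y j == 1) 1, \sum_(j <- r | y j == 1) 2 * (m - yh j),
   \sum_(j <- r | y j == 1) (m - yh j) ^+ 2, all_pairs_loss r).
Proof.
elim/last_ind: r => [|r x IHr]; first by rewrite /all_pairs_loss !big_nil.
rewrite pairwise_rcons => /andP[r_le_x /IHr {}IHr].
rewrite foldl_rcons IHr /= all_pairs_loss_rcons //.
under [X in ind (y x == -1) * X]eq_bigr do rewrite -addrA.
rewrite [X in ind (y x == -1) * X]sum_sqrD !big_rcons /ind.
by case: (y x == 1) => /=; congr (_, _, _, _); ring.
Qed.

End AllPairsSquaredHinge.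

Theorem theorem2 (R : realFieldType) (n : nat) (yh y : 'I_n -> R) (m : R)
    (s : 'S_n)
    (hy : forall i, y i = 1 \/ y i = -1)
    (hm : 0 <= m)
    (hs : forall i j : 'I_n, (i <= j)%N -> vval m yh y (s i) <= vval m yh y (s j)) :
  \sum_(k < n | y k == -1) \sum_(j < n | y j == 1) sq_hinge m (yh j - yh k)
  = L_final m yh y s.
Proof.
have sorted_s : pairwise (fun i j => vval m yh y i <= vval m yh y j)
                         [seq s i | i <- enum 'I_n].
  by apply: pairwise_map_enum_ord => i j /ltnW; apply: hs.
rewrite /L_final /abcL_final foldl_abcL_step //=.
by rewrite -(all_pairs_loss_perm m yh y (perm_index_enum_map s)).
Qed.
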